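(* Let $G$ be a gap-free finite simple graph, $s\geq1$, and $e_1,\dots,e_s$ edges of $G$ (repetitions allowed). Then the graph $G'$ associated to $(I(G)^{s+1}:e_1\cdots e_s)^{\mathrm{pol}}$ is gap-free.
   Context: $S=K[x_1,\dots,x_n]$ with the $x_i$ the vertices of $G$; $I(G)=(xy: xy\text{ an edge})$; edges identified with monomials; $(J:m)=\{f: fm\in J\}$; the ideal $J=(I(G)^{s+1}:e_1\cdots e_s)$ is generated by quadratic monomials. Polarization: $J^{\mathrm{pol}}\subseteq K[x_1,\dots,x_n,x_1',\dots,x_n']$ is generated by all $x_ix_j$ ($i\ne j$) with $x_ix_j\in J$ and all $x_kx_k'$ with $x_k^2\in J$. The associated graph $G'$ has vertex set $V(G)\cup\{x_k' : x_k^2\in J\}$ and edge set $\{x_ix_j : i\neq j, x_ix_j\in J\}\cup\{x_kx_k' : x_k^2\in J\}$, so $I(G')=J^{\mathrm{pol}}$. Two vertex-disjoint edges $uv$, $xy$ form a gap in a graph if there is no edge with one endpoint in $\{u,v\}$ and the other in $\{x,y\}$; a graph is gap-free if it has no gap. *)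

From mathcomp Require Import all_boot.
Set Implicit Arguments. Unset Strict Implicit. Unset Printing Implicit Defensive.

(* A finite simple graph G on vertex set T (a finType)
   is a symmetric irreflexive relation [e : rel T].  Monomials in
   K[x_t : t in T] are exponent vectors {ffun T -> nat}. *)

Definition monom (T : finType) := {ffun T -> nat}.

Definition mone (T : finType) : monom T := [ffun => 0%N].

Definition mmul (T : finType) (m1 m2 : monom T) : monom T :=
  [ffun x => m1 x + m2 x].

Definition mdvd (T : finType) (m1 m2 : monom T) : bool :=
  [forall x, m1 x <= m2 x].

Definition mquad (T : finType) (u v : T) : monom T :=
  [ffun x => ((x == u) + (x == v))%N].

Definition medges (T : finType) (es : seq (T * T)) : monom T :=
  foldr (fun p acc => mmul (mquad p.1 p.2) acc) (mone T) es.

Definition all_edges (T : finType) (e : rel T) (es : seq (T * T)) : bool :=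
  all (fun p => e p.1 p.2) es.

(* m belongs to the monomial ideal I(G)^k, i.e. m is divisible by a product
   of k edges of G (repetitions allowed), these products being the monomial
   generators of I(G)^k. *)
Definition in_edge_pow (T : finType) (e : rel T) (k : nat) (m : monom T) : Prop :=
  exists es : seq (T * T), [/\ size es = k, all_edges e es & mdvd (medges es) m].

Definition in_colon (T : finType) (e : rel T) (k : nat) (f m : monom T) : Prop :=
  in_edge_pow e k (mmul m f).

(* membership of a quadratic monomial x_i x_j in J = (I(G)^{s+1} : e_1...e_s),
   where es = [e_1; ...; e_s] and s = size es *)
Definition inJ (T : finType) (e : rel T) (es : seq (T * T)) (i j : T) : Prop :=
  in_colon e (size es).+1 (medges es) (mquad i j).

(* Its vertices live in T + T:
   inl x = x, inr x = x' (the new variable, a vertex only when x^2 in J). *)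
Definition Gpol_edge (T : finType) (e : rel T) (es : seq (T * T))
  (a b : T + T) : Prop :=
  match a, b with
  | inl i, inl j => i <> j /\ inJ e es i j
  | inl k, inr k' => k = k' /\ inJ e es k k
  | inr k', inl k => k = k' /\ inJ e es k k
  | inr _, inr _ => False
  end.

Definition Gpol_vertex (T : finType) (e : rel T) (es : seq (T * T))
  (a : T + T) : Prop :=
  match a with inl _ => True | inr k => inJ e es k k end.

Definition is_gap (V : Type) (E : V -> V -> Prop) (u v x y : V) : Prop :=
  [/\ E u v, E x y,
      [/\ u <> x, u <> y, v <> x & v <> y] &
      [/\ ~ E u x, ~ E u y, ~ E v x & ~ E v y]].

Definition gap_free (V : Type) (E : V -> V -> Prop) : Prop :=
  forall u v x y, ~ is_gap E u v x y.

From mathcomp Require Import all_boot zify.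

(* By Banerjee's description of the colon ideal, x_i x_j lies in
   (I(G)^{s+1} : e_1...e_s) iff i and j are even-connected: joined by a walk
   i = p_0, p_1, ..., p_{2k+1} = j of G whose edges p_{2l+1} p_{2l+2} are
   distinct members of the list e_1, ..., e_s (k = 0 being adjacency).
   Take even-connections a ~ b and c ~ d.  If they share one of the e_i,
   splicing them at the first shared one connects a to c or to d.
   Otherwise they use disjoint parts of the list, and gap-freeness of G,
   applied to their last edges t1 b and t2 d, yields an edge t1 t2, t1 d,
   b t2 or b d, hence an even-connection a ~ c, a ~ d, b ~ c or b ~ d.
   Finally, the unprimed copies of both endpoints of an edge of G' are
   endpoints of it, so a gap in G' would project to two such connections
   with no connection across. *)

Set Implicit Arguments. Unset Strict Implicit. Unset Printing Implicit Defensive.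

Section EdgeMonomials.
Variable T : finType.
Implicit Types (p : T * T) (U V : seq (T * T)) (x y z : T).

Definition joins p x y : Prop := p = (x, y) \/ p = (y, x).

Lemma joinsC p x y : joins p x y -> joins p y x.
Proof. by case; [right | left]. Qed.

Lemma medges_nil z : medges [::] z = 0.
Proof. by rewrite ffunE. Qed.

Lemma medges_cons p U z : medges (p :: U) z = (z == p.1) + (z == p.2) + medges U z.
Proof. by rewrite /medges /= /mmul /mquad !ffunE. Qed.

Lemma medges_joins p x y U z :
  joins p x y -> medges (p :: U) z = (z == x) + (z == y) + medges U z.
Proof. by rewrite medges_cons => -[] ->; rewrite // (addnC (z == y)). Qed.

Lemma medgesE U z :
  medges U z = count (fun p => z == p.1) U + count (fun p => z == p.2) U.
Proof. by elim: U => [|p U IH]; rewrite ?medges_nil // medges_cons IH /=; lia. Qed.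

Lemma medges_cat U V z : medges (U ++ V) z = medges U z + medges V z.
Proof. by rewrite !medgesE !count_cat; lia. Qed.

Lemma medges_perm U V z : perm_eq U V -> medges U z = medges V z.
Proof. by move/permP=> eqUV; rewrite !medgesE !eqUV. Qed.

Lemma sum_indicator x : \sum_z (z == x : nat) = 1.
Proof. by rewrite (bigD1 x) //= eqxx big1 // => z /negbTE ->. Qed.

Lemma sum_medges U : \sum_z medges U z = (size U).*2.
Proof.
elim: U => [|p U IH]; first by rewrite big1 // => z _; rewrite medges_nil.
under eq_bigr do rewrite medges_cons.
by rewrite !big_split /= IH !sum_indicator doubleS.
Qed.

Lemma medges_pick U x : 0 < medges U x ->
  exists y p, [/\ joins p x y, p \in U &
    forall z, medges U z = (z == x) + (z == y) + medges (rem p U) z].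
Proof.
suff pick : forall p y, joins p x y -> p \in U -> exists y p, [/\ joins p x y, p \in U &
    forall z, medges U z = (z == x) + (z == y) + medges (rem p U) z].
  rewrite medgesE addn_gt0 -!has_count => /orP[] /hasP[[a b] pU /eqP /= xE].
    by apply: (pick _ b _ pU); left; rewrite xE.
  by apply: (pick _ a _ pU); right; rewrite xE.
move=> p y pxy pU; exists y, p; split=> // z.
by rewrite (medges_perm z (perm_to_rem pU)) (medges_joins _ _ pxy).
Qed.

End EdgeMonomials.

Section SubPerm.
Variable A : eqType.
Implicit Types (a : A) (U V : seq A).

Definition subperm U V : Prop := forall a, count_mem a U <= count_mem a V.

Lemma subperm_cons a U V : subperm (a :: U) V <-> a \in V /\ subperm U (rem a V).
Proof.
split=> [sub | [aV sub] b]; last by rewrite (permP (perm_to_rem aV)) /= leq_add2l.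
have aV : a \in V by rewrite -has_pred1 has_count; apply: leq_trans (sub a); rewrite /= eqxx.
split=> // b; have := sub b; rewrite (permP (perm_to_rem aV)) /= leq_add2l //.
Qed.

Lemma subperm_rem a U V : a \notin U -> subperm U V -> subperm U (rem a V).
Proof.
move=> aU sub b; rewrite count_mem_rem.
by case: (eqVneq a b) => [<-|_]; rewrite ?(count_memPn aU) ?subn0.
Qed.

Lemma subperm_perm_cat U V : subperm U V -> exists W, perm_eq V (U ++ W).
Proof.
elim: U V => [|a U IH] V; first by exists V.
case/subperm_cons=> aV /IH[W eqW]; exists W.
by apply: perm_trans (perm_to_rem aV) _; rewrite perm_cons.
Qed.

End SubPerm.

Section EvenConnection.
Variables (T : finType) (e : rel T).
Implicit Types (p : T * T) (U V : seq (T * T)) (x y z : T).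

Fixpoint alt_path x y U : Prop :=
  if U is p :: U' then exists u v, [/\ joins p u v, e x u & alt_path v y U']
  else x = y.

Definition even_conn x y U : Prop := exists2 t, alt_path x t U & e t y.

Lemma alt_path_cat x y U V :
  alt_path x y (U ++ V) <-> exists2 t, alt_path x t U & alt_path t y V.
Proof.
elim: U x => [|p U IH] x /=; first by split=> [|[t ->]]; first exists x.
split.
  by case=> u [v [puv xu /IH[t vt ty]]]; exists t => //; exists u, v.
by case=> t [u [v [puv xu vt]]] ty; exists u, v; split=> //; apply/IH; exists t.
Qed.

Lemma even_conn_cat x y U V :
  even_conn x y (U ++ V) <-> exists2 t, alt_path x t U & even_conn t y V.
Proof.
split=> [[t /alt_path_cat[m xm mt] ty] | [m xm [t mt ty]]].
  by exists m => //; exists t.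
by exists t => //; apply/alt_path_cat; exists m.
Qed.

Lemma even_conn_cons x y p U :
  even_conn x y (p :: U) <-> exists u v, [/\ joins p u v, e x u & even_conn v y U].
Proof.
split=> [[t [u [v [puv xu vt]]] ty] | [u [v [puv xu [t vt ty]]]]].
  by exists u, v; split=> //; exists t.
by exists t => //; exists u, v.
Qed.

Hypothesis e_sym : symmetric e.

Lemma alt_path_rev x y z U : alt_path x y U -> e y z -> even_conn z x (rev U).
Proof.
elim: U x => [|p U IH] x /=; first by move=> -> yz; exists z; rewrite // e_sym.
case=> u [v [puv xu vy]] yz; have [t zt tv] := IH _ vy yz.
rewrite rev_cons -cats1; apply/even_conn_cat; exists t => //.
by apply/even_conn_cons; exists v, u; split; [exact: joinsC | | exists u; rewrite // e_sym].
Qed.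

Lemma alt_path_splice a t c d U1 U2 es :
  alt_path a t U1 -> even_conn c d U2 -> subperm U1 es -> subperm U2 es ->
  subperm (U1 ++ U2) es \/
  exists2 W, subperm W es & even_conn a c W \/ even_conn a d W.
Proof.
elim: U1 a es => [|g U1 IH] a es /=; first by left.
case=> u [v [guv au vt]] cd /subperm_cons[gV sub1] sub2.
have [gU2|gU2] := boolP (g \in U2); last first.
  have [sub|[W subW aW]] := IH _ _ vt cd sub1 (subperm_rem gU2 sub2).
    by left; apply/subperm_cons.
  right; exists (g :: W); first exact/subperm_cons.
  by case: aW => vW; [left | right]; apply/even_conn_cons; exists u, v.
right; move: cd sub2; case/splitPr: gU2 => pre post.
case/even_conn_cat=> y cy /even_conn_cons[u' [v' [guv' yu' v'd]]] sub2.
have [[Eu Ev] | [Eu Ev]] : (u' = u /\ v' = v) \/ (u' = v /\ v' = u).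
  by case: guv guv' => -> [] [-> ->]; auto.
- exists (g :: post).
    by move=> p; apply: leq_trans (sub2 p); rewrite count_cat leq_addl.
  by right; apply/even_conn_cons; exists u, v; split; rewrite // -Ev.
- exists (g :: rev pre).
    by move=> p; apply: leq_trans (sub2 p); rewrite /= count_cat count_rev /=; lia.
  left; apply/even_conn_cons; exists u, v; split=> //.
  by apply: alt_path_rev cy _; rewrite -Eu.
Qed.

End EvenConnection.

Section ColonIdeal.
Variables (T : finType) (e : rel T).
Implicit Types (U es ES : seq (T * T)) (x y z t : T).

Lemma inJE es x y : inJ e es x y <-> exists ES, [/\ size ES = (size es).+1,
  all_edges e ES & forall z, medges ES z <= (z == x) + (z == y) + medges es z].
Proof.
rewrite /inJ /in_colon /in_edge_pow /mdvd.
split=> -[ES [sizeES ES_edges ESdvd]]; exists ES; split=> //.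
  by move=> z; move/forallP/(_ z): ESdvd; rewrite /mmul /mquad !ffunE.
by apply/forallP=> z; rewrite /mmul /mquad !ffunE.
Qed.

Lemma inJ_sym es x y : inJ e es x y -> inJ e es y x.
Proof.
case/inJE=> ES [sizeES ES_edges ESdvd]; apply/inJE; exists ES; split=> // z.
by have := ESdvd z; lia.
Qed.

Lemma alt_path_medges x t U : alt_path e x t U -> exists W, [/\ size W = size U,
  all_edges e W & forall z, medges W z + (z == t) = (z == x) + medges U z].
Proof.
elim: U x => [|p U IH] x /=; first by move=> ->; exists [::]; split=> // z; rewrite addnC.
case=> u [v [puv xu /IH[W [sizeW W_edges WE]]]].
exists ((x, u) :: W); split; [by rewrite /= sizeW | by rewrite /= xu | move=> z].
by rewrite (medges_joins _ _ puv) medges_cons /=; have := WE z; lia.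
Qed.

Lemma inJ_even_conn es x y U :
  all_edges e es -> even_conn e x y U -> subperm U es -> inJ e es x y.
Proof.
move=> es_edges [t xt ty] /subperm_perm_cat[R esUR].
have [W [sizeW W_edges WE]] := alt_path_medges xt.
apply/inJE; exists ((t, y) :: W ++ R); split.
- by rewrite /= size_cat sizeW (perm_size esUR) size_cat.
- move: es_edges W_edges; rewrite /all_edges /= ty (perm_all _ esUR) !all_cat.
  by case/andP=> _ -> ->.
- move=> z; rewrite medges_cons medges_cat (medges_perm z esUR) medges_cat /=.
  by have := WE z; lia.
Qed.

Hypothesis e_sym : symmetric e.

Lemma even_conn_of_medges es ES x y : all_edges e ES ->
  (forall z, medges ES z = (z == x) + (z == y) + medges es z) ->
  exists2 U, even_conn e x y U & subperm U es.
Proof.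
(* Peel off the edge x u of ES and, unless u = y, an entry u v of es. *)
elim: (size es).+1 {-2}es (ltnSn (size es)) ES x => // n IH {}es es_n ES x ES_edges ESE.
have [u [p [pxu pES ESpE]]] : exists u p, [/\ joins p x u, p \in ES &
    forall z, medges ES z = (z == x) + (z == u) + medges (rem p ES) z].
  by apply: medges_pick; rewrite ESE eqxx.
have xu : e x u.
  by move/allP/(_ p pES): ES_edges; case: pxu => -> //=; rewrite e_sym.
have [<- | uy] := eqVneq u y; first by exists [::] => //; exists x.
have [v [q [quv qes esqE]]] : exists v q, [/\ joins q u v, q \in es &
    forall z, medges es z = (z == u) + (z == v) + medges (rem q es) z].
  by apply: medges_pick; have := ESpE u; rewrite ESE eqxx (negbTE uy); lia.
have [|||U vy subU] := IH (rem q es) _ (rem p ES) v.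
- by move: es_n; rewrite (perm_size (perm_to_rem qes)).
- by apply/allP=> r /mem_rem; move/allP: ES_edges; apply.
- by move=> z; have := ESpE z; rewrite ESE esqE; lia.
exists (q :: U); last exact/subperm_cons.
by apply/even_conn_cons; exists u, v.
Qed.

Lemma even_conn_of_inJ es x y :
  inJ e es x y -> exists2 U, even_conn e x y U & subperm U es.
Proof.
case/inJE=> ES [sizeES ES_edges ESdvd]; apply: (even_conn_of_medges ES_edges).
(* Both sides have degree 2(s + 1), so the divisibility is an equality. *)
have [_] := @leqif_sum T predT _ _ _ (fun z _ => leqif_eq (ESdvd z)).
rewrite sum_medges !big_split /= !sum_indicator sum_medges sizeES eqxx.
by move/esym/forallP=> ESE z; apply/eqP/ESE.
Qed.

End ColonIdeal.

Lemma gap_free_cross (T : finType) (e : rel T) u v x y :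
  gap_free (fun a b : T => e a b) -> e u v -> e x y ->
  [\/ (u == x) || e u x, (u == y) || e u y, (v == x) || e v x | (v == y) || e v y].
Proof.
move=> G_gap_free uv xy.
have [|nUX] := boolP ((u == x) || e u x); first by constructor 1.
have [|nUY] := boolP ((u == y) || e u y); first by constructor 2.
have [|nVX] := boolP ((v == x) || e v x); first by constructor 3.
have [|nVY] := boolP ((v == y) || e v y); first by constructor 4.
exfalso; apply: (G_gap_free u v x y); move: nUX nUY nVX nVY; rewrite !negb_or.
move=> /andP[/eqP ? /negP ?] /andP[/eqP ? /negP ?] /andP[/eqP ? /negP ?] /andP[/eqP ? /negP ?].
by split.
Qed.

Lemma is_gap_cross (V : eqType) (R : V -> V -> Prop) u v x y p q :
  is_gap R u v x y -> p \in [:: u; v] -> q \in [:: x; y] -> p <> q /\ ~ R p q.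
Proof.
by case=> _ _ [? ? ? ?] [? ? ? ?]; rewrite !inE => /orP[] /eqP-> /orP[] /eqP->.
Qed.

Lemma inJ_gap_free (T : finType) (e : rel T) (es : seq (T * T)) a b c d :
  symmetric e -> gap_free (fun u v : T => e u v) -> all_edges e es ->
  b <> d -> inJ e es a b -> inJ e es c d ->
  [\/ inJ e es a c, inJ e es a d, inJ e es b c | inJ e es b d].
Proof.
move=> e_sym G_gap_free es_edges bd /(even_conn_of_inJ e_sym)[U1 [t1 at1 t1b] sub1].
move=> /(even_conn_of_inJ e_sym)[U2 cd sub2].
have connJ := inJ_even_conn es_edges.
have [sub | [W subW [acW | adW]]] := alt_path_splice e_sym at1 cd sub1 sub2; last 2 first.
- by constructor 1; apply: connJ acW subW.
- by constructor 2; apply: connJ adW subW.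
have [t2 ct2 t2d] := cd.
have ac : e t1 t2 -> inJ e es a c.
  move=> t1t2; apply: (connJ _ _ (U1 ++ rev U2)).
    by apply/even_conn_cat; exists t1 => //; apply: (alt_path_rev e_sym ct2); rewrite e_sym.
  by move=> p; apply: leq_trans (sub p); rewrite !count_cat count_rev.
have ad : e t1 d -> inJ e es a d by move=> t1d; apply: connJ sub1; exists t1.
case: (gap_free_cross G_gap_free t1b t2d) => /orP[/eqP E | E].
- by constructor 2; apply: ad; rewrite E.
- by constructor 1; apply: ac.
- by constructor 1; apply: ac; rewrite E e_sym.
- by constructor 2; apply: ad.
- by constructor 1; apply: ac; rewrite -E.
- by constructor 3; apply/inJ_sym/(connJ _ _ U2) => //; exists t2; rewrite // e_sym.
- by [].
- by constructor 4; apply: (connJ _ _ [::]) => //; exists b.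
Qed.

Section PolarizationGraph.
Variables (T : finType) (e : rel T) (es : seq (T * T)).
Local Notation E := (Gpol_edge e es).

Definition unprime (a : T + T) : T := match a with inl x | inr x => x end.

Lemma Gpol_edge_inJ a b : E a b -> inJ e es (unprime a) (unprime b).
Proof. by case: a b => [i|i] [j|j] //= [ij J] //; rewrite -ij. Qed.

Lemma Gpol_edge_unprime a b p :
  E a b -> p \in [:: a; b] -> inl (unprime p) \in [:: a; b].
Proof.
move=> ab; rewrite !inE => /orP[] /eqP ->;
  by case: a b ab => [i|i] [j|j] //= [ij _]; rewrite ?ij eqxx ?orbT.
Qed.

Lemma Gpol_gap_cross u v x y p q : is_gap E u v x y ->
  p \in [:: u; v] -> q \in [:: x; y] ->
  unprime p <> unprime q /\ ~ inJ e es (unprime p) (unprime q).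
Proof.
move=> gap pu qx; have [uv xy _ _] := gap.
have [neq nE] := is_gap_cross gap (Gpol_edge_unprime uv pu) (Gpol_edge_unprime xy qx).
have pq : unprime p <> unprime q by move=> pq; apply: neq; rewrite pq.
by split=> // J; apply: nE.
Qed.

End PolarizationGraph.

Theorem lemma6p14 (T : finType) (e : rel T)
  (e_sym : symmetric e) (e_irr : irreflexive e)
  (G_gap_free : gap_free (fun u v : T => e u v))
  (es : seq (T * T)) (s_ge1 : (0 < size es)%N) (es_edges : all_edges e es) :
  gap_free (Gpol_edge e es).
Proof.
move=> u v x y gap; have [uv xy _ _] := gap.
have cross p q := Gpol_gap_cross (p := p) (q := q) gap.
have [bd _] := cross v y (mem_last u [:: v]) (mem_last x [:: y]).
have := inJ_gap_free e_sym G_gap_free es_edges bd (Gpol_edge_inJ uv) (Gpol_edge_inJ xy).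
by case=> J; apply: (cross _ _ _ _).2 J; rewrite !inE eqxx ?orbT.
Qed.
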